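(* Let $\mathcal{G}$ be a simple temporal clique and let $u,v$ be distinct vertices. If $\{u,v\}=e^-(v)$, then for every vertex $x\notin\{u,v\}$ there is a journey from $u$ to $x$ whose first edge is $\{u,v\}$ (i.e. $u$ can reach all vertices through $v$). Symmetrically, if $u,w$ are distinct vertices with $\{u,w\}=e^+(w)$, then for every vertex $x\notin\{u,w\}$ there is a journey from $x$ to $u$ whose last edge is $\{w,u\}$ (i.e. all vertices can reach $u$ through $w$).
   Context: A simple temporal clique is a pair $\mathcal{G}=(G,\lambda)$ where $G=(V,E)$ is the complete graph on a finite vertex set $V$ and $\lambda:E\to\mathbb{N}$ assigns to each edge a single integer label such that any two distinct edges sharing an endpoint have different labels. A journey from $x$ to $y$ is a sequence of vertices $x=u_0,u_1,\dots,u_k=y$ ($k\ge1$) with $\lambda(\{u_{i-1},u_i\})<\lambda(\{u_i,u_{i+1}\})$ for all $1\le i<k$; its first edge is $\{u_0,u_1\}$ and its last edge is $\{u_{k-1},u_k\}$. For a vertex $v$, $e^-(v)$ (resp. $e^+(v)$) denotes the edge incident to $v$ with the smallest (resp. largest) label. *)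

From mathcomp Require Import all_boot.
Set Implicit Arguments. Unset Strict Implicit. Unset Printing Implicit Defensive.

(* The labelling of
   the edge {x,y} (x <> y) of the complete graph is [lam x y]; [lam] is
   required to be symmetric, so it is a function of the unordered pair.
   Values [lam x x] are irrelevant (loops are not edges). *)
Record temporal_clique (V : finType) := TClique {
  lam : V -> V -> nat;
  lam_sym : forall x y, lam x y = lam y x;
  lam_proper : forall x y z, x != y -> x != z -> y != z -> lam x y != lam x z
}.

Section Journeys.
Variables (V : finType) (G : temporal_clique V).

Fixpoint incr_labels (a b : V) (s : seq V) : bool :=
  match s with
  | [::] => true
  | c :: s' => (lam G a b < lam G b c) && incr_labels b c s'
  end.

(* [journey x p] : the vertex sequence x :: p (with p nonempty, i.e. k >= 1)
   is a journey: consecutive vertices are distinct (so each step is an edge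
   of the complete graph) and the labels strictly increase. *)
Definition journey (x : V) (p : seq V) : bool :=
  match p with
  | [::] => false
  | y :: p' => path (fun a b => a != b) x p && incr_labels x y p'
  end.

Definition journey_from_to (x y : V) (p : seq V) : bool :=
  journey x p && (last x p == y).

(* The first edge of the journey x :: p is {x, head x p}; its last edge is
   {last x (belast x p), last x p}. *)

Definition is_e_minus (v u : V) : Prop :=
  u != v /\ forall w, w != v -> lam G v u <= lam G v w.

Definition is_e_plus (w u : V) : Prop :=
  u != w /\ forall z, z != w -> lam G w z <= lam G w u.
End Journeys.

(* A journey through the minimal edge e^-(v) = {u,v} may continue along any
   other edge {v,x}, since its label is strictly larger (labels at v are
   pairwise distinct); dually any edge {x,w} can be followed by the maximal
   edge e^+(w) = {w,u}.  So two-edge journeys suffice. *)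

From mathcomp Require Import all_boot.

Section TwoEdgeJourneys.
Variables (V : finType) (G : temporal_clique V).

Lemma journey_pair (x y z : V) :
  journey G x [:: y; z] = [&& x != y, y != z & lam G x y < lam G y z].
Proof. by rewrite /journey /= !andbT andbA. Qed.

Lemma e_minus_lt (v u w : V) :
  is_e_minus G v u -> w != v -> w != u -> lam G v u < lam G v w.
Proof.
move=> [uv min_vu] wv wu.
rewrite ltn_neqAle min_vu // andbT.
by apply: lam_proper; rewrite eq_sym.
Qed.

Lemma e_plus_lt (w u z : V) :
  is_e_plus G w u -> z != w -> z != u -> lam G w z < lam G w u.
Proof.
move=> [uw max_wu] zw zu.
rewrite ltn_neqAle max_wu // andbT.
by apply: lam_proper; rewrite // eq_sym.
Qed.

End TwoEdgeJourneys.

Theorem lemma1 (V : finType) (G : temporal_clique V) :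
  (forall u v : V, u != v -> is_e_minus G v u ->
     forall x : V, x != u -> x != v ->
       exists p : seq V, journey_from_to G u x p /\ head u p = v)
  /\
  (forall u w : V, u != w -> is_e_plus G w u ->
     forall x : V, x != u -> x != w ->
       exists p : seq V, journey_from_to G x u p /\ last x (belast x p) = w).
Proof.
split.
- move=> u v uv emin x xu xv; exists [:: v; x]; split=> //.
  rewrite /journey_from_to journey_pair uv eq_sym xv eqxx andbT /=.
  by rewrite lam_sym e_minus_lt.
- move=> u w uw emax x xu xw; exists [:: w; u]; split=> //.
  rewrite /journey_from_to journey_pair xw eq_sym uw eqxx andbT /=.
  by rewrite lam_sym e_plus_lt.
Qed.
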